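(* Let $J$ be the transformation $J:(u,v)(z)\mapsto(-\overline{u(\bar z)},\overline{v(\bar z)})$, which maps solutions of (L) to solutions of (L), and let $J_*f$ denote the image of a vector function $f$. Let $f_{j\pm}$, $j=1,2$, denote the $j$-th column of $W_\pm$. Then $J_*f_{2\pm}=f_{2\mp}$ in general, and $J_*f_{1\pm}=-f_{1\mp}$ whenever $l\in\mathbb Z$.
   Context: Let $\omega>0$, $l\ge0$ real, $\mu>0$. System (L): $u'=z^{-2}\big(-(lz+\mu(1+z^2))u+\frac{z}{2i\omega}v\big)$, $v'=\frac{1}{2i\omega z}u$. $F(z)=\operatorname{diag}(z^{-l}e^{\mu(1/z-z)},1)$. $S_+$ (resp. $S_-$) is a sector with vertex $0$ containing the closed upper (resp. lower) half-plane minus $0$ whose closure avoids $i\mathbb R_-$ (resp. $i\mathbb R_+$), $S_-=\overline{S_+}$. $H_\pm$ are the unique invertible matrix functions holomorphic on $S_\pm$, $C^\infty$ on $\overline{S_\pm}\setminus\{\infty\}$, $H_\pm(0)=\mathrm{Id}$, such that $w=H_\pm\tilde w$ transforms (L) into $\tilde u'=-z^{-2}(lz+\mu(1+z^2))\tilde u$, $\tilde v'=0$. The canonical sectorial fundamental matrices are $W_\pm=H_\pm F$, with the branch of $F$ on $S_-$ obtained by counterclockwise continuation from $S_+$. *)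

From Stdlib Require Import Reals Lra ZArith.
Open Scope R_scope.

Definition C := (R * R)%type.
Definition RtoC (x : R) : C := (x, 0).
Definition C0 : C := (0, 0).
Definition C1 : C := (1, 0).
Definition Ci : C := (0, 1).
Definition Cadd (z w : C) : C := (fst z + fst w, snd z + snd w).
Definition Copp (z : C) : C := (- fst z, - snd z).
Definition Csub (z w : C) : C := Cadd z (Copp w).
Definition Cmul (z w : C) : C :=
  (fst z * fst w - snd z * snd w, fst z * snd w + snd z * fst w).
Definition Cnorm2 (z : C) : R := fst z * fst z + snd z * snd z.
Definition Cnorm (z : C) : R := sqrt (Cnorm2 z).
Definition Cinv (z : C) : C := (fst z / Cnorm2 z, - snd z / Cnorm2 z).
Definition Cdiv (z w : C) : C := Cmul z (Cinv w).
Definition Cconj (z : C) : C := (fst z, - snd z).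
Definition Cexp (z : C) : C :=
  (exp (fst z) * cos (snd z), exp (fst z) * sin (snd z)).
Definition polar (r theta : R) : C := (r * cos theta, r * sin theta).

Definition in_sector (a b : R) (z : C) : Prop :=
  exists r theta, 0 < r /\ a < theta < b /\ z = polar r theta.
Definition in_sector_cl (a b : R) (z : C) : Prop :=
  exists r theta, 0 <= r /\ a <= theta <= b /\ z = polar r theta.

Definition has_cderiv (f : C -> C) (z d : C) : Prop :=
  forall eps, 0 < eps -> exists delta, 0 < delta /\
    forall h, 0 < Cnorm h < delta ->
      Cnorm (Csub (Cdiv (Csub (f (Cadd z h)) (f z)) h) d) < eps.

Definition holomorphic_on (S : C -> Prop) (f : C -> C) : Prop :=
  forall z, S z -> exists d, has_cderiv f z d.

Definition continuous_on (P : C -> Prop) (f : C -> C) : Prop :=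
  forall z, P z -> forall eps, 0 < eps -> exists delta, 0 < delta /\
    forall w, P w -> Cnorm (Csub w z) < delta -> Cnorm (Csub (f w) (f z)) < eps.

(** C^infty on the closure Sbar of the open sector S (for a function
    holomorphic on S): all derivatives extend continuously to Sbar. *)
Definition smooth_on_closure (S Sbar : C -> Prop) (f : C -> C) : Prop :=
  exists D : nat -> C -> C,
    (forall z, Sbar z -> D O z = f z) /\
    (forall k z, S z -> has_cderiv (D k) z (D (Datatypes.S k) z)) /\
    (forall k, continuous_on Sbar (D k)).

Record MatFun := { m11 : C -> C; m12 : C -> C; m21 : C -> C; m22 : C -> C }.

(** Coefficients of system (L):  w' = A(z) w  with
    A = [[ -(l z + mu (1+z^2))/z^2 , 1/(2 i omega z) ],
         [ 1/(2 i omega z)          , 0               ]]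
    and of the normal form  w~' = B(z) w~,  B = diag(b(z), 0),
    b(z) = -(l z + mu (1+z^2))/z^2. *)
Definition bcoef (l mu : R) (z : C) : C :=
  Copp (Cdiv (Cadd (Cmul (RtoC l) z) (Cmul (RtoC mu) (Cadd C1 (Cmul z z))))
             (Cmul z z)).
Definition ccoef (omega : R) (z : C) : C :=
  Cinv (Cmul (Cmul (RtoC 2) (Cmul Ci (RtoC omega))) z).

(** w = H w~ transforms (L) into the normal form iff H' = A H - H B. *)
Definition gauge_eq (omega l mu : R) (S : C -> Prop) (H : MatFun) : Prop :=
  forall z, S z ->
    has_cderiv (m11 H) z
      (Csub (Cadd (Cmul (bcoef l mu z) (m11 H z)) (Cmul (ccoef omega z) (m21 H z)))
            (Cmul (m11 H z) (bcoef l mu z))) /\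
    has_cderiv (m12 H) z
      (Cadd (Cmul (bcoef l mu z) (m12 H z)) (Cmul (ccoef omega z) (m22 H z))) /\
    has_cderiv (m21 H) z
      (Csub (Cmul (ccoef omega z) (m11 H z)) (Cmul (m21 H z) (bcoef l mu z))) /\
    has_cderiv (m22 H) z (Cmul (ccoef omega z) (m12 H z)).

Definition is_normalizing_H (omega l mu : R) (S Sbar : C -> Prop) (H : MatFun)
  : Prop :=
  (forall z, S z ->
     Csub (Cmul (m11 H z) (m22 H z)) (Cmul (m12 H z) (m21 H z)) <> C0) /\
  holomorphic_on S (m11 H) /\ holomorphic_on S (m12 H) /\
  holomorphic_on S (m21 H) /\ holomorphic_on S (m22 H) /\
  smooth_on_closure S Sbar (m11 H) /\ smooth_on_closure S Sbar (m12 H) /\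
  smooth_on_closure S Sbar (m21 H) /\ smooth_on_closure S Sbar (m22 H) /\
  m11 H C0 = C1 /\ m12 H C0 = C0 /\ m21 H C0 = C0 /\ m22 H C0 = C1 /\
  gauge_eq omega l mu S H.

(** (1,1) entry of F at z = r e^{i theta}, using the branch of log with
    log z = ln r + i theta:  z^{-l} e^{mu (1/z - z)}. *)
Definition Fentry (l mu r theta : R) : C :=
  let z := polar r theta in
  Cmul (Cexp (Cmul (RtoC (- l)) (ln r, theta)))
       (Cexp (Cmul (RtoC mu) (Csub (Cinv z) z))).

(** first column of W = H F at z = r e^{i theta} (theta = chosen branch arg) *)
Definition col1W (H : MatFun) (l mu r theta : R) : C * C :=
  let z := polar r theta in
  (Cmul (m11 H z) (Fentry l mu r theta), Cmul (m21 H z) (Fentry l mu r theta)).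

(** second column of W = H F (F's second column is (0,1)) *)
Definition col2W (H : MatFun) (z : C) : C * C := (m12 H z, m22 H z).

(** J acting on a value: J_* f (z) = Jval (f (conj z)) *)
Definition Jval (p : C * C) : C * C := (Copp (Cconj (fst p)), Cconj (snd p)).
Definition vopp (p : C * C) : C * C := (Copp (fst p), Copp (snd p)).

(* The symmetry z -> conj z of (L) turns a normalising gauge H_+ on S_+
   into the gauge [conj_gauge H_+] on S_- = conj S_+, with the same normalisation at 0;
   so everything reduces to uniqueness of the normalising gauge on a sector containing
   both real half-axes.  For two such gauges h, k the matrix G = adj(h) k satisfies
   G' = [B, G] with B = diag(b, 0): det h, G11 and G22 are constant, while G12 e^P and
   G21 e^(-P) are constant for a primitive P of -b.  Near 0, Re P -> -oo along the
   positive axis and Re (-P) -> -oo along the negative one, so the boundary values at 0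
   force G = I and det h = 1, i.e. k = h.  For integer l the branch of z^(-l) does not
   matter, which gives the statement for the first columns as well. *)
From Pilot Require Import Defs.
From Stdlib Require Import Reals ZArith Lra.
From Coquelicot Require Complex Coquelicot.
Open Scope R_scope.
Notation C := Defs.C.

(** * Complex arithmetic *)

Lemma C_ring_theory : ring_theory C0 Defs.C1 Cadd Cmul Csub Copp (@eq C).
Proof.
  split; intros; repeat match goal with z : C |- _ => destruct z end;
    cbv [C0 Defs.C1 Cadd Cmul Csub Copp fst snd]; f_equal; ring.
Qed.
Add Ring C_ring : C_ring_theory.

Lemma Cconj_involutive z : Cconj (Cconj z) = z.
Proof. destruct z; cbv [Cconj fst snd]; f_equal; ring. Qed.
Lemma Cconj_add u w : Cconj (Cadd u w) = Cadd (Cconj u) (Cconj w).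
Proof. cbv [Cconj Cadd fst snd]; f_equal; ring. Qed.
Lemma Cconj_opp u : Cconj (Copp u) = Copp (Cconj u).
Proof. reflexivity. Qed.
Lemma Cconj_sub u w : Cconj (Csub u w) = Csub (Cconj u) (Cconj w).
Proof. cbv [Cconj Csub Cadd Copp fst snd]; f_equal; ring. Qed.
Lemma Cconj_mul u w : Cconj (Cmul u w) = Cmul (Cconj u) (Cconj w).
Proof. cbv [Cconj Cmul fst snd]; f_equal; ring. Qed.
Lemma Cconj_inv w : Cconj (Cinv w) = Cinv (Cconj w).
Proof.
  destruct w as [x y]; cbv [Cconj Cinv Cnorm2 fst snd].
  replace (x * x + - y * - y) with (x * x + y * y) by ring; f_equal; unfold Rdiv; ring.
Qed.
Lemma Cconj_RtoC x : Cconj (RtoC x) = RtoC x.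
Proof. cbv [Cconj RtoC fst snd]; f_equal; ring. Qed.
Lemma Cconj_C0 : Cconj C0 = C0.
Proof. apply Cconj_RtoC. Qed.
Lemma Cconj_C1 : Cconj Defs.C1 = Defs.C1.
Proof. apply Cconj_RtoC. Qed.
Lemma Cconj_Ci : Cconj Ci = Copp Ci.
Proof. cbv [Cconj Copp Ci fst snd]; f_equal; ring. Qed.
Lemma Cconj_exp w : Cconj (Cexp w) = Cexp (Cconj w).
Proof. destruct w; cbv [Cconj Cexp fst snd]; rewrite cos_neg, sin_neg; f_equal; ring. Qed.

Hint Rewrite Cconj_add Cconj_sub Cconj_opp Cconj_mul Cconj_inv Cconj_RtoC Cconj_C1
  Cconj_Ci Cconj_involutive : cconj.

Lemma Cinv_opp w : Cinv (Copp w) = Copp (Cinv w).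
Proof.
  destruct w as [x y]; cbv [Copp Cinv Cnorm2 fst snd].
  replace (- x * - x + - y * - y) with (x * x + y * y) by ring; f_equal; unfold Rdiv; ring.
Qed.

Lemma Cnorm_Cmod u : Cnorm u = Complex.Cmod u.
Proof. unfold Cnorm, Cnorm2, Complex.Cmod; f_equal; ring. Qed.
Lemma Cnorm_ge0 u : 0 <= Cnorm u.
Proof. rewrite Cnorm_Cmod; apply Complex.Cmod_ge_0. Qed.
Lemma Cnorm_mul u w : Cnorm (Cmul u w) = Cnorm u * Cnorm w.
Proof. rewrite !Cnorm_Cmod; apply Complex.Cmod_mult. Qed.
Lemma Cnorm_triangle u w : Cnorm (Cadd u w) <= Cnorm u + Cnorm w.
Proof. rewrite !Cnorm_Cmod; apply Complex.Cmod_triangle. Qed.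
Lemma Cnorm_opp u : Cnorm (Copp u) = Cnorm u.
Proof. rewrite !Cnorm_Cmod; apply Complex.Cmod_opp. Qed.
Lemma Cnorm_conj u : Cnorm (Cconj u) = Cnorm u.
Proof. rewrite !Cnorm_Cmod; apply Complex.Cmod_conj. Qed.
Lemma Cnorm_RtoC x : Cnorm (RtoC x) = Rabs x.
Proof. rewrite Cnorm_Cmod; apply Complex.Cmod_R. Qed.
Lemma Cnorm_eq0 u : Cnorm u = 0 -> u = C0.
Proof. rewrite Cnorm_Cmod; apply Complex.Cmod_eq_0. Qed.
Lemma Rabs_fst_le_Cnorm u : Rabs (fst u) <= Cnorm u.
Proof.
  rewrite Cnorm_Cmod; eapply Rle_trans; [apply Rmax_l | apply Complex.Rmax_Cmod].
Qed.
Lemma Rabs_snd_le_Cnorm u : Rabs (snd u) <= Cnorm u.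
Proof.
  rewrite Cnorm_Cmod; eapply Rle_trans; [apply Rmax_r | apply Complex.Rmax_Cmod].
Qed.
Lemma Cnorm_le_Rabs_sum u : Cnorm u <= Rabs (fst u) + Rabs (snd u).
Proof.
  destruct u as [x y].
  assert (E : (x, y) = Cadd (RtoC x) (Cmul Ci (RtoC y)))
    by (cbv [Cadd Cmul Ci RtoC fst snd]; f_equal; ring).
  cbn [fst snd]; rewrite E at 1.
  eapply Rle_trans; [apply Cnorm_triangle|].
  rewrite Cnorm_mul, !Cnorm_RtoC.
  replace (Cnorm Ci) with 1
    by (unfold Cnorm, Cnorm2, Ci; cbn; replace (0 * 0 + 1 * 1) with 1 by ring; now rewrite sqrt_1).
  lra.
Qed.

Lemma Cnorm_polar r th : 0 <= r -> Cnorm (polar r th) = r.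
Proof.
  intros Hr; unfold Cnorm, Cnorm2, polar; cbn.
  replace (r * cos th * (r * cos th) + r * sin th * (r * sin th))
    with (r * r * ((sin th)² + (cos th)²)) by (unfold Rsqr; ring).
  rewrite sin2_cos2, Rmult_1_r; apply sqrt_square, Hr.
Qed.

Lemma polar_neq0 r th : 0 < r -> polar r th <> C0.
Proof.
  intros Hr E.
  assert (N : Cnorm (polar r th) = r) by (apply Cnorm_polar; lra).
  rewrite E in N; unfold Cnorm, Cnorm2, C0 in N; cbn in N.
  rewrite Rmult_0_l, Rplus_0_l, sqrt_0 in N; lra.
Qed.

Lemma Cconj_polar r th : Cconj (polar r th) = polar r (- th).
Proof. unfold Cconj, polar; cbn; rewrite cos_neg, sin_neg; f_equal; ring. Qed.

Lemma polar_2PI_sub r th : polar r (2 * PI - th) = Cconj (polar r th).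
Proof.
  unfold polar, Cconj; cbn; rewrite cos_minus, sin_minus, cos_2PI, sin_2PI; f_equal; ring.
Qed.

Lemma polar_sub_2PI r th : polar r (th - 2 * PI) = polar r th.
Proof.
  unfold polar; rewrite cos_minus, sin_minus, cos_2PI, sin_2PI; f_equal; ring.
Qed.

Lemma in_sector_polar al be r th : 0 < r -> al < th < be -> in_sector al be (polar r th).
Proof. intros; exists r, th; auto. Qed.

Lemma Cinv_polar r th : 0 < r -> Cinv (polar r th) = (cos th / r, - sin th / r).
Proof.
  intros Hr; unfold Cinv, Cnorm2, polar; cbn.
  replace (r * cos th * (r * cos th) + r * sin th * (r * sin th))
    with (r * r * ((sin th)² + (cos th)²)) by (unfold Rsqr; ring).
  rewrite sin2_cos2; f_equal; field; lra.
Qed.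

Lemma Cnorm_exp w : Cnorm (Cexp w) = exp (fst w).
Proof.
  destruct w as [x y]; unfold Cnorm, Cnorm2, Cexp; cbn.
  replace (exp x * cos y * (exp x * cos y) + exp x * sin y * (exp x * sin y))
    with (exp x * exp x * ((sin y)² + (cos y)²)) by (unfold Rsqr; ring).
  rewrite sin2_cos2, Rmult_1_r; apply sqrt_square, Rlt_le, exp_pos.
Qed.

Lemma Cexp_mul_opp w : Cmul (Cexp w) (Cexp (Copp w)) = Defs.C1.
Proof.
  destruct w as [x y]; cbv [Cmul Cexp Copp Defs.C1 fst snd].
  rewrite cos_neg, sin_neg, exp_Ropp.
  pose proof (exp_pos x); pose proof (sin2_cos2 y); unfold Rsqr in *.
  f_equal; field_simplify; try lra.
Qed.

Lemma Cmul_exp_eq0 X w : Cmul X (Cexp w) = C0 -> X = C0.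
Proof.
  intros E.
  transitivity (Cmul X (Cmul (Cexp w) (Cexp (Copp w)))); [rewrite Cexp_mul_opp; ring|].
  transitivity (Cmul (Cmul X (Cexp w)) (Cexp (Copp w))); [ring|].
  rewrite E; ring.
Qed.

Lemma Cexp_add_2kPI x y k : Cexp (x, y + 2 * (IZR k * PI)) = Cexp (x, y).
Proof.
  unfold Cexp; cbn.
  rewrite cos_plus, sin_plus, cos_2a_sin, sin_2a, (sin_eq_0_1 (IZR k * PI)) by eauto.
  f_equal; ring.
Qed.

(** * Derivatives along real parameters *)

Definition has_rderiv (f : R -> C) (t : R) (d : C) : Prop :=
  derivable_pt_lim (fun s => fst (f s)) t (fst d) /\
  derivable_pt_lim (fun s => snd (f s)) t (snd d).

Lemma has_rderiv_eq f t d d' : has_rderiv f t d -> d = d' -> has_rderiv f t d'.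
Proof. now intros H <-. Qed.

Lemma has_rderiv_add f g t df dg : has_rderiv f t df -> has_rderiv g t dg ->
  has_rderiv (fun s => Cadd (f s) (g s)) t (Cadd df dg).
Proof.
  intros [f1 f2] [g1 g2]; split; cbn.
  - apply (derivable_pt_lim_plus (fun s => fst (f s)) (fun s => fst (g s))); auto.
  - apply (derivable_pt_lim_plus (fun s => snd (f s)) (fun s => snd (g s))); auto.
Qed.

Lemma has_rderiv_opp f t df : has_rderiv f t df ->
  has_rderiv (fun s => Copp (f s)) t (Copp df).
Proof.
  intros [f1 f2]; split; cbn.
  - apply (derivable_pt_lim_opp (fun s => fst (f s))); auto.
  - apply (derivable_pt_lim_opp (fun s => snd (f s))); auto.
Qed.

Lemma has_rderiv_sub f g t df dg : has_rderiv f t df -> has_rderiv g t dg ->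
  has_rderiv (fun s => Csub (f s) (g s)) t (Csub df dg).
Proof. intros; apply has_rderiv_add, has_rderiv_opp; auto. Qed.

Lemma has_rderiv_mul f g t df dg : has_rderiv f t df -> has_rderiv g t dg ->
  has_rderiv (fun s => Cmul (f s) (g s)) t (Cadd (Cmul df (g t)) (Cmul (f t) dg)).
Proof.
  intros [f1 f2] [g1 g2].
  refine (has_rderiv_eq _ _ (_, _) _ (conj _ _) _).
  - apply (derivable_pt_lim_minus (fun s => fst (f s) * fst (g s))
             (fun s => snd (f s) * snd (g s)));
      apply (derivable_pt_lim_mult (fun s => _ (f s)) (fun s => _ (g s))); eassumption.
  - apply (derivable_pt_lim_plus (fun s => fst (f s) * snd (g s))
             (fun s => snd (f s) * fst (g s)));
      apply (derivable_pt_lim_mult (fun s => _ (f s)) (fun s => _ (g s))); eassumption.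
  - cbv [Cadd Cmul fst snd]; f_equal; ring.
Qed.

Lemma has_rderiv_exp w t dw : has_rderiv w t dw ->
  has_rderiv (fun s => Cexp (w s)) t (Cmul dw (Cexp (w t))).
Proof.
  intros [w1 w2].
  refine (has_rderiv_eq _ _ (_, _) _ (conj _ _) _).
  - apply (derivable_pt_lim_mult (fun s => exp (fst (w s))) (fun s => cos (snd (w s)))).
    + apply (derivable_pt_lim_comp (fun s => fst (w s)) exp);
        [exact w1 | apply derivable_pt_lim_exp].
    + apply (derivable_pt_lim_comp (fun s => snd (w s)) cos);
        [exact w2 | apply derivable_pt_lim_cos].
  - apply (derivable_pt_lim_mult (fun s => exp (fst (w s))) (fun s => sin (snd (w s)))).
    + apply (derivable_pt_lim_comp (fun s => fst (w s)) exp);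
        [exact w1 | apply derivable_pt_lim_exp].
    + apply (derivable_pt_lim_comp (fun s => snd (w s)) sin);
        [exact w2 | apply derivable_pt_lim_sin].
  - cbv [Cmul Cexp fst snd]; f_equal; ring.
Qed.

Lemma has_rderiv_mul_exp0 (X w : R -> C) s a :
  has_rderiv X s (Cmul a (X s)) -> has_rderiv w s (Copp a) ->
  has_rderiv (fun t => Cmul (X t) (Cexp (w t))) s C0.
Proof.
  intros HX Hw; eapply has_rderiv_eq;
    [apply has_rderiv_mul; [exact HX | apply has_rderiv_exp, Hw] | cbv beta; ring].
Qed.

Lemma derivable_pt_lim0_const (g : R -> R) p q :
  (forall t, p < t < q -> derivable_pt_lim g t 0) ->
  forall x y, p < x < q -> p < y < q -> g x = g y.
Proof.
  intros Hg.
  assert (Hle : forall x y, p < x < q -> p < y < q -> x <= y -> g x = g y).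
  { intros x y Hx Hy Hxy.
    assert (Hd : forall t, x < t < y -> derivable_pt g t)
      by (intros t Ht; exists 0; apply Hg; lra).
    symmetry; apply (null_derivative_loc g x y Hd); try lra.
    - intros t Ht; apply derivable_continuous_pt; exists 0; apply Hg; lra.
    - intros t P; apply derive_pt_eq_0, Hg; lra. }
  intros x y Hx Hy; destruct (Rle_dec x y).
  - apply Hle; auto.
  - symmetry; apply Hle; auto; lra.
Qed.

Lemma has_rderiv0_const (f : R -> C) p q :
  (forall t, p < t < q -> has_rderiv f t C0) ->
  forall x y, p < x < q -> p < y < q -> f x = f y.
Proof.
  intros Hf x y Hx Hy; rewrite (surjective_pairing (f x)), (surjective_pairing (f y)).
  f_equal; [apply (derivable_pt_lim0_const (fun s => fst (f s)) p q)
           |apply (derivable_pt_lim0_const (fun s => snd (f s)) p q)];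
    auto; intros t Ht; apply Hf; auto.
Qed.

Lemma derivable_pt_lim_littleo (g : R -> R) t l : derivable_pt_lim g t l ->
  forall eps, 0 < eps -> exists delta, 0 < delta /\ forall s, Rabs s < delta ->
    Rabs (g (t + s) - g t - l * s) <= eps * Rabs s.
Proof.
  intros H eps He; destruct (H eps He) as [[delta Hd] Hh]; cbn in Hh.
  exists delta; split; auto; intros s Hs.
  destruct (Req_dec s 0) as [->|Hs0].
  - rewrite Rplus_0_r, Rabs_R0; replace (g t - g t - l * 0) with 0 by ring.
    rewrite Rabs_R0; lra.
  - replace (g (t + s) - g t - l * s) with (((g (t + s) - g t) / s - l) * s) by (field; auto).
    rewrite Rabs_mult; apply Rmult_le_compat_r; [apply Rabs_pos | left; auto].
Qed.

Lemma derivable_pt_lim_of_littleo (g : R -> R) t l :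
  (forall eps, 0 < eps -> exists delta, 0 < delta /\ forall s, Rabs s < delta ->
     Rabs (g (t + s) - g t - l * s) <= eps * Rabs s) ->
  derivable_pt_lim g t l.
Proof.
  intros H eps He; destruct (H (eps / 2)) as [delta [Hd K]]; [lra|].
  exists (mkposreal delta Hd); intros s Hs0 Hs; cbn in Hs.
  assert (Hsp : 0 < Rabs s) by (apply Rabs_pos_lt; auto).
  replace ((g (t + s) - g t) / s - l) with ((g (t + s) - g t - l * s) / s) by (field; auto).
  unfold Rdiv; rewrite Rabs_mult, Rabs_inv.
  apply Rle_lt_trans with (eps / 2 * Rabs s * / Rabs s).
  - apply Rmult_le_compat_r; [apply Rlt_le, Rinv_0_lt_compat|]; auto.
  - field_simplify; lra.
Qed.

Definition rderiv_littleo (f : R -> C) (t : R) (d : C) : Prop :=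
  forall eps, 0 < eps -> exists delta, 0 < delta /\ forall s, Rabs s < delta ->
    Cnorm (Csub (Csub (f (t + s)) (f t)) (Cmul d (RtoC s))) <= eps * Rabs s.

Lemma has_rderiv_iff_littleo f t d : has_rderiv f t d <-> rderiv_littleo f t d.
Proof.
  split.
  - intros [H1 H2] eps He.
    destruct (derivable_pt_lim_littleo _ _ _ H1 (eps / 2)) as [d1 [Hd1 K1]]; [lra|].
    destruct (derivable_pt_lim_littleo _ _ _ H2 (eps / 2)) as [d2 [Hd2 K2]]; [lra|].
    exists (Rmin d1 d2); split; [apply Rmin_glb_lt; auto|]; intros s Hs.
    specialize (K1 s (Rlt_le_trans _ _ _ Hs (Rmin_l d1 d2))).
    specialize (K2 s (Rlt_le_trans _ _ _ Hs (Rmin_r d1 d2))).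
    eapply Rle_trans; [apply Cnorm_le_Rabs_sum|]; cbn.
    replace (fst (f (t + s)) + - fst (f t) + - (fst d * s - snd d * 0))
      with (fst (f (t + s)) - fst (f t) - fst d * s) by ring.
    replace (snd (f (t + s)) + - snd (f t) + - (fst d * 0 + snd d * s))
      with (snd (f (t + s)) - snd (f t) - snd d * s) by ring.
    lra.
  - intros H; split; apply derivable_pt_lim_of_littleo; intros eps He;
      destruct (H eps He) as [delta [Hd K]]; exists delta; split; auto; intros s Hs;
      specialize (K s Hs).
    + eapply Rle_trans; [|exact K]; eapply Rle_trans; [|apply Rabs_fst_le_Cnorm].
      right; cbn; f_equal; ring.
    + eapply Rle_trans; [|exact K]; eapply Rle_trans; [|apply Rabs_snd_le_Cnorm].
      right; cbn; f_equal; ring.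
Qed.

Lemma has_cderiv_littleo f z d : has_cderiv f z d ->
  forall eps, 0 < eps -> exists delta, 0 < delta /\ forall h, Cnorm h < delta ->
    Cnorm (Csub (Csub (f (Cadd z h)) (f z)) (Cmul d h)) <= eps * Cnorm h.
Proof.
  intros H eps Heps; destruct (H eps Heps) as [delta [Hd Hh]].
  exists delta; split; auto; intros h Hlt.
  destruct (Req_dec (Cnorm h) 0) as [E|E].
  - apply Cnorm_eq0 in E; subst h.
    replace (Cadd z C0) with z by ring.
    replace (Csub (Csub (f z) (f z)) (Cmul d C0)) with C0 by ring.
    unfold Cnorm, Cnorm2, C0; cbn; rewrite Rmult_0_l, Rplus_0_l, sqrt_0; lra.
  - assert (Hp : 0 < Cnorm h) by (pose proof (Cnorm_ge0 h); lra).
    specialize (Hh h (conj Hp Hlt)).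
    set (X := Csub (f (Cadd z h)) (f z)) in *.
    replace (Csub X (Cmul d h)) with (Cmul (Csub (Cdiv X h) d) h).
    + rewrite Cnorm_mul; apply Rmult_le_compat_r; lra.
    + assert (N : Cnorm2 h <> 0) by (intro N; apply E; unfold Cnorm; rewrite N; apply sqrt_0).
      destruct X as [x1 x2], h as [h1 h2], d as [d1 d2]; unfold Cnorm2 in N; cbn in N.
      cbv [Csub Cadd Copp Cmul Cdiv Cinv Cnorm2 fst snd]; f_equal; field; auto.
Qed.

Lemma has_rderiv_comp f g t v d : has_rderiv g t v -> has_cderiv f (g t) d ->
  has_rderiv (fun s => f (g s)) t (Cmul d v).
Proof.
  rewrite !has_rderiv_iff_littleo; intros Hg Hf eps He.
  set (M := Cnorm v + 1); set (N := Cnorm d + 1).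
  assert (HM : 0 < M) by (pose proof (Cnorm_ge0 v); unfold M; lra).
  assert (HN : 0 < N) by (pose proof (Cnorm_ge0 d); unfold N; lra).
  destruct (has_cderiv_littleo f (g t) d Hf (eps / (2 * M))) as [d1 [Hd1 K1]].
  { apply Rdiv_lt_0_compat; lra. }
  destruct (Hg (Rmin 1 (eps / (2 * N)))) as [d2 [Hd2 K2]].
  { apply Rmin_glb_lt; [lra | apply Rdiv_lt_0_compat; lra]. }
  exists (Rmin d2 (d1 / M)); split.
  { apply Rmin_glb_lt; auto; apply Rdiv_lt_0_compat; lra. }
  intros s Hs.
  assert (Hs2 : Rabs s < d2) by (pose proof (Rmin_l d2 (d1 / M)); lra).
  assert (Hs1 : M * Rabs s < d1).
  { pose proof (Rmin_r d2 (d1 / M)).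
    apply (Rmult_lt_compat_l M) in Hs; [|lra].
    assert (M * Rmin d2 (d1 / M) <= M * (d1 / M)) by (apply Rmult_le_compat_l; lra).
    apply Rlt_le_trans with (M * (d1 / M)); [lra|right; field; lra]. }
  specialize (K2 s Hs2).
  set (h := Csub (g (t + s)) (g t)); set (E := Csub h (Cmul v (RtoC s))).
  assert (HE : Cnorm E <= Rmin 1 (eps / (2 * N)) * Rabs s) by exact K2.
  pose proof (Rmin_l 1 (eps / (2 * N))); pose proof (Rmin_r 1 (eps / (2 * N))).
  pose proof (Rabs_pos s); pose proof (Cnorm_ge0 d); pose proof (Cnorm_ge0 E).
  assert (Hh : Cnorm h <= M * Rabs s).
  { replace h with (Cadd (Cmul v (RtoC s)) E) by (unfold E; ring).
    eapply Rle_trans; [apply Cnorm_triangle|]; rewrite Cnorm_mul, Cnorm_RtoC.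
    assert (Cnorm E <= Rabs s) by nra.
    unfold M; lra. }
  specialize (K1 h ltac:(lra)).
  replace (Cadd (g t) h) with (g (t + s)) in K1 by (unfold h; ring).
  replace (Csub (Csub (f (g (t + s))) (f (g t))) (Cmul (Cmul d v) (RtoC s)))
    with (Cadd (Csub (Csub (f (g (t + s))) (f (g t))) (Cmul d h)) (Cmul d E))
    by (unfold E; ring).
  eapply Rle_trans; [apply Cnorm_triangle|]; rewrite Cnorm_mul.
  assert (A : eps / (2 * M) * Cnorm h <= eps / 2 * Rabs s).
  { apply Rle_trans with (eps / (2 * M) * (M * Rabs s)).
    - apply Rmult_le_compat_l; auto; apply Rlt_le, Rdiv_lt_0_compat; lra.
    - right; field; lra. }
  assert (B : Cnorm d * Cnorm E <= eps / 2 * Rabs s).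
  { apply Rle_trans with (N * (eps / (2 * N) * Rabs s)).
    - apply Rmult_le_compat; auto; [unfold N; lra | nra].
    - right; field; lra. }
  lra.
Qed.

(** * Limits at 0 along rays *)

Definition lim_right0 (f : R -> C) (L : C) : Prop :=
  forall eps, 0 < eps -> exists delta, 0 < delta /\
    forall t, 0 < t < delta -> Cnorm (Csub (f t) L) < eps.

Lemma lim_right0_ext f g L : (forall t, 0 < t -> f t = g t) ->
  lim_right0 f L -> lim_right0 g L.
Proof.
  intros E H eps He; destruct (H eps He) as [delta [Hd K]].
  exists delta; split; auto; intros t Ht; rewrite <- E by lra; auto.
Qed.

Lemma lim_right0_eq f L L' : lim_right0 f L -> L = L' -> lim_right0 f L'.
Proof. now intros H <-. Qed.

Lemma lim_right0_sub f g L M : lim_right0 f L -> lim_right0 g M ->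
  lim_right0 (fun t => Csub (f t) (g t)) (Csub L M).
Proof.
  intros Hf Hg eps He.
  destruct (Hf (eps / 2)) as [d1 [Hd1 K1]]; [lra|].
  destruct (Hg (eps / 2)) as [d2 [Hd2 K2]]; [lra|].
  exists (Rmin d1 d2); split; [apply Rmin_glb_lt; auto|]; intros t Ht.
  pose proof (Rmin_l d1 d2); pose proof (Rmin_r d1 d2).
  replace (Csub (Csub (f t) (g t)) (Csub L M))
    with (Cadd (Csub (f t) L) (Copp (Csub (g t) M))) by ring.
  eapply Rle_lt_trans; [apply Cnorm_triangle|]; rewrite Cnorm_opp.
  specialize (K1 t ltac:(lra)); specialize (K2 t ltac:(lra)); lra.
Qed.

Lemma lim_right0_mul f g L M : lim_right0 f L -> lim_right0 g M ->
  lim_right0 (fun t => Cmul (f t) (g t)) (Cmul L M).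
Proof.
  intros Hf Hg eps He.
  set (A := Cnorm M + 1); set (B := Cnorm L + 1).
  assert (HA : 0 < A) by (pose proof (Cnorm_ge0 M); unfold A; lra).
  assert (HB : 0 < B) by (pose proof (Cnorm_ge0 L); unfold B; lra).
  destruct (Hf (eps / (2 * A))) as [d1 [Hd1 K1]]; [apply Rdiv_lt_0_compat; lra|].
  destruct (Hg (Rmin 1 (eps / (2 * B)))) as [d2 [Hd2 K2]].
  { apply Rmin_glb_lt; [lra | apply Rdiv_lt_0_compat; lra]. }
  exists (Rmin d1 d2); split; [apply Rmin_glb_lt; auto|]; intros t Ht.
  pose proof (Rmin_l d1 d2); pose proof (Rmin_r d1 d2).
  specialize (K1 t ltac:(lra)); specialize (K2 t ltac:(lra)).
  pose proof (Rmin_l 1 (eps / (2 * B))); pose proof (Rmin_r 1 (eps / (2 * B))).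
  assert (Hgt : Cnorm (g t) <= A).
  { replace (g t) with (Cadd M (Csub (g t) M)) by ring.
    eapply Rle_trans; [apply Cnorm_triangle|]; unfold A; lra. }
  replace (Csub (Cmul (f t) (g t)) (Cmul L M))
    with (Cadd (Cmul (Csub (f t) L) (g t)) (Cmul L (Csub (g t) M))) by ring.
  eapply Rle_lt_trans; [apply Cnorm_triangle|]; rewrite !Cnorm_mul.
  pose proof (Cnorm_ge0 (Csub (f t) L)); pose proof (Cnorm_ge0 L).
  pose proof (Cnorm_ge0 (g t)); pose proof (Cnorm_ge0 (Csub (g t) M)).
  assert (P1 : Cnorm (Csub (f t) L) * Cnorm (g t) < eps / 2).
  { apply Rle_lt_trans with (Cnorm (Csub (f t) L) * A); [apply Rmult_le_compat_l; lra|].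
    apply Rlt_le_trans with (eps / (2 * A) * A);
      [apply Rmult_lt_compat_r; lra | right; field; lra]. }
  assert (P2 : Cnorm L * Cnorm (Csub (g t) M) <= eps / 2).
  { assert (Cnorm L <= B) by (unfold B; lra).
    apply Rle_trans with (B * (eps / (2 * B)));
      [apply Rmult_le_compat; lra | right; field; lra]. }
  lra.
Qed.

Lemma lim_right0_opp f L : lim_right0 f L -> lim_right0 (fun t => Copp (f t)) (Copp L).
Proof.
  intros H eps He; destruct (H eps He) as [delta [Hd K]]; exists delta; split; auto.
  intros t Ht; replace (Csub (Copp (f t)) (Copp L)) with (Copp (Csub (f t) L)) by ring.
  rewrite Cnorm_opp; auto.
Qed.

Lemma lim_right0_conj f L : lim_right0 f L -> lim_right0 (fun t => Cconj (f t)) (Cconj L).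
Proof.
  intros H eps He; destruct (H eps He) as [delta [Hd K]]; exists delta; split; auto.
  intros t Ht; rewrite <- Cconj_sub, Cnorm_conj; auto.
Qed.

Lemma lim_right0_unique f K L : (forall t, 0 < t -> f t = K) -> lim_right0 f L -> K = L.
Proof.
  intros E H.
  assert (Hsmall : forall eps, 0 < eps -> Cnorm (Csub K L) < eps).
  { intros eps He; destruct (H eps He) as [delta [Hd Hk]].
    rewrite <- (E (delta / 2)) by lra; apply Hk; lra. }
  assert (Cnorm (Csub K L) = 0).
  { pose proof (Cnorm_ge0 (Csub K L)).
    destruct (Rle_lt_or_eq_dec _ _ H0) as [P|P]; [|auto].
    specialize (Hsmall _ P); lra. }
  transitivity (Cadd (Csub K L) L); [ring|]; rewrite (Cnorm_eq0 _ H0); ring.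
Qed.

Lemma lim_right0_mul_bounded g E M : lim_right0 g C0 ->
  (forall t, 0 < t < 1 -> Cnorm (E t) <= M) ->
  lim_right0 (fun t => Cmul (g t) (E t)) C0.
Proof.
  intros Hg HE eps He.
  assert (HM : 0 <= M) by (eapply Rle_trans; [apply Cnorm_ge0 | apply (HE (1/2)); lra]).
  destruct (Hg (eps / (M + 1))) as [delta [Hd K]]; [apply Rdiv_lt_0_compat; lra|].
  exists (Rmin 1 delta); split; [apply Rmin_glb_lt; lra|]; intros t Ht.
  pose proof (Rmin_l 1 delta); pose proof (Rmin_r 1 delta).
  specialize (K t ltac:(lra)); specialize (HE t ltac:(lra)).
  replace (Csub (g t) C0) with (g t) in K by ring.
  replace (Csub (Cmul (g t) (E t)) C0) with (Cmul (g t) (E t)) by ring.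
  rewrite Cnorm_mul; pose proof (Cnorm_ge0 (g t)); pose proof (Cnorm_ge0 (E t)).
  apply Rle_lt_trans with (Cnorm (g t) * (M + 1)); [apply Rmult_le_compat_l; lra|].
  apply Rlt_le_trans with (eps / (M + 1) * (M + 1));
    [apply Rmult_lt_compat_r; lra | right; field; lra].
Qed.

Lemma lim_right0_continuous (P : C -> Prop) f th :
  continuous_on P f -> P C0 -> (forall t, 0 < t -> P (polar t th)) ->
  lim_right0 (fun t => f (polar t th)) (f C0).
Proof.
  intros Hc H0 Hs eps He; destruct (Hc C0 H0 eps He) as [delta [Hd K]].
  exists delta; split; auto; intros t Ht; apply K; [apply Hs; lra|].
  replace (Csub (polar t th) C0) with (polar t th) by ring.
  rewrite Cnorm_polar; lra.
Qed.

Lemma eq_on_sector_of_rderiv0 (Phi : R -> R -> C) al be th0 L :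
  al < th0 < be ->
  (forall r th, 0 < r -> al < th < be -> has_rderiv (fun s => Phi s th) r C0) ->
  (forall r th, 0 < r -> al < th < be -> has_rderiv (fun s => Phi r s) th C0) ->
  lim_right0 (fun t => Phi t th0) L ->
  forall r th, 0 < r -> al < th < be -> Phi r th = L.
Proof.
  intros Hth0 Hray Harc Hlim r th Hr Hth.
  transitivity (Phi r th0).
  - apply (has_rderiv0_const (fun s => Phi r s) al be); auto.
  - apply (lim_right0_unique (fun t => Phi t th0)); auto.
    intros t Ht; apply (has_rderiv0_const (fun s => Phi s th0) 0 (t + r + 1)); try lra.
    intros x Hx; apply Hray; lra.
Qed.

(** * The coefficient b and a primitive of -b *)

Lemma bcoef_eq l mu z : z <> C0 ->
  bcoef l mu z =
  Copp (Cadd (Cmul (RtoC l) (Cinv z)) (Cadd (Cmul (RtoC mu) (Cmul (Cinv z) (Cinv z))) (RtoC mu))).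
Proof.
  intros Hz; destruct z as [x y].
  assert (N : x * x + y * y <> 0) by (intro N; apply Hz; unfold C0; f_equal; nra).
  assert (N2 : (x * x - y * y) * (x * x - y * y) + (x * y + y * x) * (x * y + y * x) <> 0).
  { replace ((x * x - y * y) * (x * x - y * y) + (x * y + y * x) * (x * y + y * x))
      with ((x * x + y * y) * (x * x + y * y)) by ring.
    apply Rmult_integral_contrapositive; auto. }
  unfold bcoef; cbv [Csub Cadd Copp Cmul Cdiv Cinv Cnorm2 RtoC C0 Defs.C1 fst snd].
  f_equal; field; auto.
Qed.

Lemma Cinv_polar_mul_dir r th : 0 < r ->
  Cmul (Cinv (polar r th)) (cos th, sin th) = RtoC (/ r).
Proof.
  intros Hr; rewrite Cinv_polar by auto; cbv [Cmul RtoC fst snd]; f_equal.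
  - replace (cos th / r * cos th - - sin th / r * sin th) with (((sin th)² + (cos th)²) / r)
      by (unfold Rsqr; field; lra).
    rewrite sin2_cos2; field; lra.
  - field; lra.
Qed.

Lemma bcoef_ray_dir l mu r th : 0 < r ->
  Copp (Cmul (bcoef l mu (polar r th)) (cos th, sin th)) =
  (l / r + mu * cos th / (r * r) + mu * cos th, - mu * sin th / (r * r) + mu * sin th).
Proof.
  intros Hr; rewrite bcoef_eq by (apply polar_neq0; auto).
  set (u := Cinv (polar r th)).
  transitivity (Cadd (Cmul (RtoC l) (Cmul u (cos th, sin th)))
    (Cadd (Cmul (RtoC mu) (Cmul u (Cmul u (cos th, sin th)))) (Cmul (RtoC mu) (cos th, sin th))));
    [ring|].
  unfold u; rewrite Cinv_polar_mul_dir, Cinv_polar by auto.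
  cbv [Cadd Cmul RtoC fst snd]; f_equal; field; lra.
Qed.

Lemma bcoef_arc_dir l mu r th : 0 < r ->
  Copp (Cmul (bcoef l mu (polar r th)) (- r * sin th, r * cos th)) =
  (mu * sin th / r - mu * r * sin th, l + mu * cos th / r + mu * r * cos th).
Proof.
  intros Hr.
  replace (- r * sin th, r * cos th) with (Cmul (RtoC r) (Cmul Ci (cos th, sin th)))
    by (cbv [Cmul RtoC Ci fst snd]; f_equal; ring).
  transitivity (Cmul (RtoC r) (Cmul Ci (Copp (Cmul (bcoef l mu (polar r th)) (cos th, sin th)))));
    [ring|].
  rewrite bcoef_ray_dir by auto; cbv [Cmul RtoC Ci fst snd]; f_equal; field; lra.
Qed.

(* [bweight l mu r th] is [P (r e^(i th))] for [P z = l log z - mu / z + mu z] with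
   [log z = ln r + i th]; [P' = - b]. *)
Definition bweight (l mu r th : R) : C :=
  (l * ln r - mu * cos th / r + mu * r * cos th,
   l * th + mu * sin th / r + mu * r * sin th).

Section PolarDerivatives.
Import Coquelicot.Coquelicot.

Lemma has_rderiv_ray th t : has_rderiv (fun s => polar s th) t (cos th, sin th).
Proof. split; cbn; apply is_derive_Reals; auto_derive; auto; ring. Qed.

Lemma has_rderiv_arc r th : has_rderiv (fun s => polar r s) th (- r * sin th, r * cos th).
Proof. split; cbn; apply is_derive_Reals; auto_derive; auto; ring. Qed.

Lemma has_rderiv_bweight_ray l mu r th : 0 < r ->
  has_rderiv (fun s => bweight l mu s th) r
    (Copp (Cmul (bcoef l mu (polar r th)) (cos th, sin th))).
Proof.
  intros Hr; rewrite bcoef_ray_dir by auto.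
  split; cbn; apply is_derive_Reals; auto_derive; try lra; field; lra.
Qed.

Lemma has_rderiv_bweight_arc l mu r th : 0 < r ->
  has_rderiv (fun s => bweight l mu r s) th
    (Copp (Cmul (bcoef l mu (polar r th)) (- r * sin th, r * cos th))).
Proof.
  intros Hr; rewrite bcoef_arc_dir by auto.
  split; cbn; apply is_derive_Reals; auto_derive; try lra; field; lra.
Qed.

End PolarDerivatives.

Lemma exp_le_compat x y : x <= y -> exp x <= exp y.
Proof.
  intros H; destruct (Rle_lt_or_eq_dec _ _ H) as [Hlt | ->];
    [left; apply exp_increasing | right]; auto.
Qed.

Lemma ln_le_sub1 x : 0 < x -> ln x <= x - 1.
Proof.
  intros Hx; destruct (Req_dec (ln x) 0) as [E|E].
  - rewrite E; assert (x = 1) by (rewrite <- (exp_ln x Hx), E, exp_0; auto); lra.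
  - pose proof (exp_ineq1 (ln x) E); rewrite exp_ln in H by auto; lra.
Qed.

Lemma Cnorm_exp_bweight_ray0 l mu t : 0 <= l -> 0 < mu -> 0 < t < 1 ->
  Cnorm (Cexp (bweight l mu t 0)) <= exp mu.
Proof.
  intros Hl Hmu Ht; rewrite Cnorm_exp; apply exp_le_compat; cbn; rewrite cos_0.
  assert (ln t < 0) by (rewrite <- ln_1; apply ln_increasing; lra).
  assert (0 < mu * 1 / t) by (apply Rdiv_lt_0_compat; lra).
  nra.
Qed.

(* The bound uses [ln x <= ln c + x / c - 1] for [x = 1 / t] and [c = (l + 1) / mu]. *)
Lemma Cnorm_exp_bweight_rayPI l mu t thp : 0 <= l -> 0 < mu -> 0 < t < 1 -> cos thp = -1 ->
  Cnorm (Cexp (Copp (bweight l mu t thp))) <= exp (l * (ln ((l + 1) / mu) - 1) + mu).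
Proof.
  intros Hl Hmu Ht Hc; rewrite Cnorm_exp; apply exp_le_compat; cbn; rewrite Hc.
  set (c := (l + 1) / mu); assert (Hc0 : 0 < c) by (apply Rdiv_lt_0_compat; lra).
  set (x := / t); assert (Hx : 0 < x) by (apply Rinv_0_lt_compat; lra).
  assert (Hlnx : - ln t = ln x) by (unfold x; rewrite ln_Rinv; lra).
  assert (Hlog : ln x <= ln c + x / c - 1).
  { pose proof (ln_le_sub1 (x / c) ltac:(apply Rdiv_lt_0_compat; auto)).
    unfold Rdiv in *; rewrite ln_mult, ln_Rinv in H by (auto; apply Rinv_0_lt_compat; auto).
    lra. }
  assert (Hlin : l * (x / c) <= mu * x).
  { unfold c; replace (l * (x / ((l + 1) / mu))) with (mu * x * (l / (l + 1))) by (field; lra).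
    rewrite <- (Rmult_1_r (mu * x)) at 2; apply Rmult_le_compat_l; [nra|].
    apply Rmult_le_reg_r with (l + 1); [lra|]; unfold Rdiv; rewrite Rmult_assoc, Rinv_l; lra. }
  assert (mu * -1 / t = - (mu * x)) by (unfold x; field; lra).
  nra.
Qed.

(** * Uniqueness of the normalising gauge *)

(* [adj_mul h k] is adj(h) k; in particular [m22 (adj_mul h h)] is det h. *)
Definition adj_mul (h k : MatFun) : MatFun :=
  {| m11 := fun z => Csub (Cmul (m22 h z) (m11 k z)) (Cmul (m12 h z) (m21 k z));
     m12 := fun z => Csub (Cmul (m22 h z) (m12 k z)) (Cmul (m12 h z) (m22 k z));
     m21 := fun z => Csub (Cmul (m11 h z) (m21 k z)) (Cmul (m21 h z) (m11 k z));
     m22 := fun z => Csub (Cmul (m11 h z) (m22 k z)) (Cmul (m21 h z) (m12 k z)) |}.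

Lemma adj_mul_path_rderiv omega l mu S h k g s v :
  gauge_eq omega l mu S h -> gauge_eq omega l mu S k -> S (g s) -> has_rderiv g s v ->
  let bv := Cmul (bcoef l mu (g s)) v in
  has_rderiv (fun t => m11 (adj_mul h k) (g t)) s C0 /\
  has_rderiv (fun t => m12 (adj_mul h k) (g t)) s (Cmul bv (m12 (adj_mul h k) (g s))) /\
  has_rderiv (fun t => m21 (adj_mul h k) (g t)) s (Cmul (Copp bv) (m21 (adj_mul h k) (g s))) /\
  has_rderiv (fun t => m22 (adj_mul h k) (g t)) s C0.
Proof.
  intros Gh Gk HS Hg bv.
  destruct (Gh _ HS) as (h11 & h12 & h21 & h22); destruct (Gk _ HS) as (k11 & k12 & k21 & k22).
  apply (has_rderiv_comp _ _ _ _ _ Hg) in h11, h12, h21, h22, k11, k12, k21, k22.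
  unfold bv; cbn [adj_mul m11 m12 m21 m22].
  split; [|split; [|split]];
    (eapply has_rderiv_eq;
       [apply has_rderiv_sub; apply has_rderiv_mul; eassumption | cbv beta; ring]).
Qed.

Definition radially_normalizing (omega l mu al be : R) (H : MatFun) : Prop :=
  gauge_eq omega l mu (in_sector al be) H /\
  forall th, al < th < be ->
    lim_right0 (fun t => m11 H (polar t th)) Defs.C1 /\
    lim_right0 (fun t => m12 H (polar t th)) C0 /\
    lim_right0 (fun t => m21 H (polar t th)) C0 /\
    lim_right0 (fun t => m22 H (polar t th)) Defs.C1.

Section Uniqueness.

Variables (omega l mu al be thp : R) (h k : MatFun).
Hypotheses (Hl : 0 <= l) (Hmu : 0 < mu) (Hal : al < 0) (Hbe : 0 < be)
  (Hthp : al < thp < be) (Hcos : cos thp = -1)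
  (Nh : radially_normalizing omega l mu al be h) (Nk : radially_normalizing omega l mu al be k).

Let G := adj_mul h k.

Lemma lim_adj_mul th : al < th < be ->
  lim_right0 (fun t => m11 G (polar t th)) Defs.C1 /\
  lim_right0 (fun t => m12 G (polar t th)) C0 /\
  lim_right0 (fun t => m21 G (polar t th)) C0 /\
  lim_right0 (fun t => m22 G (polar t th)) Defs.C1.
Proof.
  intros Hth; destruct (proj2 Nh th Hth) as (h11 & h12 & h21 & h22).
  destruct (proj2 Nk th Hth) as (k11 & k12 & k21 & k22).
  unfold G; cbn [adj_mul m11 m12 m21 m22].
  split; [|split; [|split]];
    (eapply lim_right0_eq; [apply lim_right0_sub; apply lim_right0_mul; eassumption | ring]).
Qed.

Lemma adj_mul_rderiv_ray r th : 0 < r -> al < th < be ->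
  let bv := Cmul (bcoef l mu (polar r th)) (cos th, sin th) in
  has_rderiv (fun s => m11 G (polar s th)) r C0 /\
  has_rderiv (fun s => m12 G (polar s th)) r (Cmul bv (m12 G (polar r th))) /\
  has_rderiv (fun s => m21 G (polar s th)) r (Cmul (Copp bv) (m21 G (polar r th))) /\
  has_rderiv (fun s => m22 G (polar s th)) r C0.
Proof.
  intros Hr Hth.
  apply (adj_mul_path_rderiv omega l mu (in_sector al be) h k (fun s => polar s th));
    [apply Nh | apply Nk | apply in_sector_polar; auto | apply has_rderiv_ray].
Qed.

Lemma adj_mul_rderiv_arc r th : 0 < r -> al < th < be ->
  let bv := Cmul (bcoef l mu (polar r th)) (- r * sin th, r * cos th) in
  has_rderiv (fun s => m11 G (polar r s)) th C0 /\
  has_rderiv (fun s => m12 G (polar r s)) th (Cmul bv (m12 G (polar r th))) /\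
  has_rderiv (fun s => m21 G (polar r s)) th (Cmul (Copp bv) (m21 G (polar r th))) /\
  has_rderiv (fun s => m22 G (polar r s)) th C0.
Proof.
  intros Hr Hth.
  apply (adj_mul_path_rderiv omega l mu (in_sector al be) h k (fun s => polar r s));
    [apply Nh | apply Nk | apply in_sector_polar; auto | apply has_rderiv_arc].
Qed.

Lemma adj_mul_diag_eq1 r th : 0 < r -> al < th < be ->
  m11 G (polar r th) = Defs.C1 /\ m22 G (polar r th) = Defs.C1.
Proof.
  intros Hr Hth; split.
  - apply (eq_on_sector_of_rderiv0 (fun r th => m11 G (polar r th)) al be 0); try lra.
    + intros; apply adj_mul_rderiv_ray; auto.
    + intros; apply adj_mul_rderiv_arc; auto.
    + apply lim_adj_mul; lra.
  - apply (eq_on_sector_of_rderiv0 (fun r th => m22 G (polar r th)) al be 0); try lra.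
    + intros; apply adj_mul_rderiv_ray; auto.
    + intros; apply adj_mul_rderiv_arc; auto.
    + apply lim_adj_mul; lra.
Qed.

Lemma adj_mul12_eq0 r th : 0 < r -> al < th < be -> m12 G (polar r th) = C0.
Proof.
  intros Hr Hth; apply (Cmul_exp_eq0 _ (bweight l mu r th)).
  apply (eq_on_sector_of_rderiv0
           (fun r th => Cmul (m12 G (polar r th)) (Cexp (bweight l mu r th))) al be 0);
    try lra.
  - intros r' th' Hr' Hth'; destruct (adj_mul_rderiv_ray r' th' Hr' Hth') as (_ & D & _).
    eapply has_rderiv_mul_exp0; [exact D | apply has_rderiv_bweight_ray; auto].
  - intros r' th' Hr' Hth'; destruct (adj_mul_rderiv_arc r' th' Hr' Hth') as (_ & D & _).
    eapply has_rderiv_mul_exp0; [exact D | apply has_rderiv_bweight_arc; auto].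
  - apply (lim_right0_mul_bounded _ _ (exp mu)); [apply lim_adj_mul; lra|].
    intros t Ht; apply Cnorm_exp_bweight_ray0; auto.
Qed.

Lemma adj_mul21_eq0 r th : 0 < r -> al < th < be -> m21 G (polar r th) = C0.
Proof.
  intros Hr Hth; apply (Cmul_exp_eq0 _ (Copp (bweight l mu r th))).
  apply (eq_on_sector_of_rderiv0
           (fun r th => Cmul (m21 G (polar r th)) (Cexp (Copp (bweight l mu r th)))) al be thp);
    auto.
  - intros r' th' Hr' Hth'; destruct (adj_mul_rderiv_ray r' th' Hr' Hth') as (_ & _ & D & _).
    eapply has_rderiv_mul_exp0; [exact D | apply has_rderiv_opp, has_rderiv_bweight_ray; auto].
  - intros r' th' Hr' Hth'; destruct (adj_mul_rderiv_arc r' th' Hr' Hth') as (_ & _ & D & _).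
    eapply has_rderiv_mul_exp0; [exact D | apply has_rderiv_opp, has_rderiv_bweight_arc; auto].
  - apply (lim_right0_mul_bounded _ _ (exp (l * (ln ((l + 1) / mu) - 1) + mu)));
      [apply lim_adj_mul; auto|].
    intros t Ht; apply Cnorm_exp_bweight_rayPI; auto.
Qed.

End Uniqueness.

Lemma adj_mul_cancel h k z :
  Cmul (m22 (adj_mul h h) z) (m11 k z) =
    Cadd (Cmul (m11 h z) (m11 (adj_mul h k) z)) (Cmul (m12 h z) (m21 (adj_mul h k) z)) /\
  Cmul (m22 (adj_mul h h) z) (m12 k z) =
    Cadd (Cmul (m11 h z) (m12 (adj_mul h k) z)) (Cmul (m12 h z) (m22 (adj_mul h k) z)) /\
  Cmul (m22 (adj_mul h h) z) (m21 k z) =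
    Cadd (Cmul (m21 h z) (m11 (adj_mul h k) z)) (Cmul (m22 h z) (m21 (adj_mul h k) z)) /\
  Cmul (m22 (adj_mul h h) z) (m22 k z) =
    Cadd (Cmul (m21 h z) (m12 (adj_mul h k) z)) (Cmul (m22 h z) (m22 (adj_mul h k) z)).
Proof. cbn [adj_mul m11 m12 m21 m22]; repeat split; ring. Qed.

Theorem radially_normalizing_unique omega l mu al be thp h k :
  0 <= l -> 0 < mu -> al < 0 < be -> al < thp < be -> cos thp = -1 ->
  radially_normalizing omega l mu al be h -> radially_normalizing omega l mu al be k ->
  forall z, in_sector al be z ->
  m11 k z = m11 h z /\ m12 k z = m12 h z /\ m21 k z = m21 h z /\ m22 k z = m22 h z.
Proof.
  intros Hl Hmu [Hal Hbe] Hthp Hcos Nh Nk z (r & th & Hr & Hth & ->).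
  destruct (adj_mul_diag_eq1 omega l mu al be h h Hal Hbe Nh Nh r th Hr Hth) as (_ & Hdet).
  destruct (adj_mul_diag_eq1 omega l mu al be h k Hal Hbe Nh Nk r th Hr Hth) as (G11 & G22).
  pose proof (adj_mul12_eq0 omega l mu al be h k Hl Hmu Hal Hbe Nh Nk r th Hr Hth) as G12.
  pose proof (adj_mul21_eq0 omega l mu al be thp h k Hl Hmu Hthp Hcos Nh Nk r th Hr Hth) as G21.
  destruct (adj_mul_cancel h k (polar r th)) as (I11 & I12 & I21 & I22).
  rewrite Hdet, G11, G12, G21, G22 in *.
  split; [|split; [|split]];
    (match goal with |- ?x = _ => transitivity (Cmul Defs.C1 x); [ring|] end);
    [rewrite I11 | rewrite I12 | rewrite I21 | rewrite I22]; ring.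
Qed.

(** * The symmetry J *)

Lemma has_cderiv_eq f z d d' : has_cderiv f z d -> d = d' -> has_cderiv f z d'.
Proof. now intros H <-. Qed.

Lemma has_cderiv_opp f z d : has_cderiv f z d -> has_cderiv (fun w => Copp (f w)) z (Copp d).
Proof.
  intros H eps He; destruct (H eps He) as [delta [Hd K]].
  exists delta; split; auto; intros h Hh; rewrite <- Cnorm_opp.
  replace (Copp (Csub (Cdiv (Csub (Copp (f (Cadd z h))) (Copp (f z))) h) (Copp d)))
    with (Csub (Cdiv (Csub (f (Cadd z h)) (f z)) h) d) by (unfold Cdiv; ring).
  auto.
Qed.

Lemma has_cderiv_conj f z d : has_cderiv f (Cconj z) d ->
  has_cderiv (fun w => Cconj (f (Cconj w))) z (Cconj d).
Proof.
  intros H eps He; destruct (H eps He) as [delta [Hd K]].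
  exists delta; split; auto; intros h Hh.
  rewrite <- Cnorm_conj in Hh; specialize (K (Cconj h) Hh).
  rewrite <- Cnorm_conj; unfold Cdiv; autorewrite with cconj; auto.
Qed.

Lemma bcoef_conj l mu z : bcoef l mu z = Cconj (bcoef l mu (Cconj z)).
Proof. unfold bcoef, Cdiv; autorewrite with cconj; reflexivity. Qed.

Lemma ccoef_conj omega z : ccoef omega z = Copp (Cconj (ccoef omega (Cconj z))).
Proof.
  unfold ccoef; autorewrite with cconj; rewrite <- Cinv_opp; f_equal; ring.
Qed.

(* [conj_gauge H z] is [P conj (H (conj z)) P] with [P = diag(-1, 1)]; hence [J_*] sends the
   columns of [H F] to those of [conj_gauge H] times [diag (- conj (F11 (conj z)), 1)]. *)
Definition conj_gauge (H : MatFun) : MatFun :=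
  {| m11 := fun z => Cconj (m11 H (Cconj z));
     m12 := fun z => Copp (Cconj (m12 H (Cconj z)));
     m21 := fun z => Copp (Cconj (m21 H (Cconj z)));
     m22 := fun z => Cconj (m22 H (Cconj z)) |}.

Lemma in_sector_conj al be z : in_sector (- be) (- al) z -> in_sector al be (Cconj z).
Proof.
  intros (r & th & Hr & Hth & ->); rewrite Cconj_polar; exists r, (- th); repeat split; auto; lra.
Qed.

Lemma gauge_eq_conj_gauge omega l mu al be H :
  gauge_eq omega l mu (in_sector al be) H ->
  gauge_eq omega l mu (in_sector (- be) (- al)) (conj_gauge H).
Proof.
  intros HG z Hz; destruct (HG _ (in_sector_conj _ _ _ Hz)) as (d11 & d12 & d21 & d22).
  cbn [conj_gauge m11 m12 m21 m22]; rewrite (bcoef_conj l mu z), (ccoef_conj omega z).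
  split; [|split; [|split]].
  - eapply has_cderiv_eq; [apply has_cderiv_conj, d11|].
    autorewrite with cconj; ring.
  - eapply has_cderiv_eq; [apply has_cderiv_opp, has_cderiv_conj, d12|].
    autorewrite with cconj; ring.
  - eapply has_cderiv_eq; [apply has_cderiv_opp, has_cderiv_conj, d21|].
    autorewrite with cconj; ring.
  - eapply has_cderiv_eq; [apply has_cderiv_conj, d22|].
    autorewrite with cconj; ring.
Qed.

Lemma radially_normalizing_conj_gauge omega l mu al be H :
  radially_normalizing omega l mu al be H ->
  radially_normalizing omega l mu (- be) (- al) (conj_gauge H).
Proof.
  intros [HG HL]; split; [apply gauge_eq_conj_gauge, HG|].
  intros th Hth; destruct (HL (- th) ltac:(lra)) as (L11 & L12 & L21 & L22).
  cbn [conj_gauge m11 m12 m21 m22].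
  split; [|split; [|split]].
  - apply (lim_right0_ext (fun t => Cconj (m11 H (polar t (- th)))));
      [intros; rewrite Cconj_polar; auto|].
    rewrite <- Cconj_C1; apply lim_right0_conj, L11.
  - apply (lim_right0_ext (fun t => Copp (Cconj (m12 H (polar t (- th))))));
      [intros; rewrite Cconj_polar; auto|].
    replace C0 with (Copp (Cconj C0)) by (rewrite Cconj_C0; ring).
    apply lim_right0_opp, lim_right0_conj, L12.
  - apply (lim_right0_ext (fun t => Copp (Cconj (m21 H (polar t (- th))))));
      [intros; rewrite Cconj_polar; auto|].
    replace C0 with (Copp (Cconj C0)) by (rewrite Cconj_C0; ring).
    apply lim_right0_opp, lim_right0_conj, L21.
  - apply (lim_right0_ext (fun t => Cconj (m22 H (polar t (- th)))));
      [intros; rewrite Cconj_polar; auto|].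
    rewrite <- Cconj_C1; apply lim_right0_conj, L22.
Qed.

Lemma radially_normalizing_of_normalizing omega l mu al be H :
  is_normalizing_H omega l mu (in_sector al be) (in_sector_cl al be) H ->
  radially_normalizing omega l mu al be H.
Proof.
  intros (_ & _ & _ & _ & _ & s11 & s12 & s21 & s22 & v11 & v12 & v21 & v22 & HG).
  split; [exact HG|]; intros th Hth.
  assert (Hlim : forall f, smooth_on_closure (in_sector al be) (in_sector_cl al be) f ->
            lim_right0 (fun t => f (polar t th)) (f C0)).
  { intros f (D & HD0 & _ & HD).
    assert (H0 : in_sector_cl al be C0)
      by (exists 0, th; repeat split; try lra; unfold polar, C0; f_equal; ring).
    assert (Hray : forall t, 0 < t -> in_sector_cl al be (polar t th))
      by (intros t Ht; exists t, th; repeat split; auto; lra).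
    rewrite <- (HD0 _ H0); apply (lim_right0_ext (fun t => D O (polar t th))).
    - intros t Ht; apply HD0, Hray, Ht.
    - apply (lim_right0_continuous (in_sector_cl al be)); auto. }
  split; [|split; [|split]];
    [rewrite <- v11 | rewrite <- v12 | rewrite <- v21 | rewrite <- v22]; apply Hlim; auto.
Qed.

(* For integer [l], the two branches of [z^(-l)] used on [S_+] and [S_-] agree. *)
Lemma Fentry_conj l mu r th : (exists k : Z, l = IZR k) ->
  Cconj (Fentry l mu r (2 * PI - th)) = Fentry l mu r th.
Proof.
  intros [k ->]; unfold Fentry; rewrite Cconj_mul, !Cconj_exp, polar_2PI_sub; f_equal.
  - set (X := Cmul (RtoC (- IZR k)) (ln r, th)).
    replace (Cconj (Cmul (RtoC (- IZR k)) (ln r, 2 * PI - th)))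
      with (fst X, snd X + 2 * (IZR k * PI))
      by (unfold X; cbv [Cconj Cmul RtoC fst snd]; f_equal; ring).
    rewrite Cexp_add_2kPI, <- surjective_pairing; reflexivity.
  - f_equal; autorewrite with cconj; reflexivity.
Qed.

Lemma Jval_col2W H z : Jval (col2W H (Cconj z)) = col2W (conj_gauge H) z.
Proof. reflexivity. Qed.

Lemma Jval_col1W H l mu r th : (exists k : Z, l = IZR k) ->
  Jval (col1W H l mu r (2 * PI - th)) = vopp (col1W (conj_gauge H) l mu r th).
Proof.
  intros Hk; unfold col1W, Jval, vopp; cbv zeta; cbn [fst snd conj_gauge m11 m21].
  rewrite <- (Fentry_conj l mu r th Hk), polar_2PI_sub.
  autorewrite with cconj; f_equal; ring.
Qed.

Lemma col1W_congr H K l mu r th :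
  m11 H (polar r th) = m11 K (polar r th) -> m21 H (polar r th) = m21 K (polar r th) ->
  col1W H l mu r th = col1W K l mu r th.
Proof. intros E1 E2; unfold col1W; cbv zeta; now rewrite E1, E2. Qed.

Theorem mainTheorem4 (omega l mu a b : R) (Hp Hm : MatFun) :
  0 < omega -> 0 <= l -> 0 < mu ->
  - PI / 2 < a < 0 -> PI < b < 3 * PI / 2 ->
  is_normalizing_H omega l mu (in_sector a b) (in_sector_cl a b) Hp ->
  is_normalizing_H omega l mu (in_sector (- b) (- a)) (in_sector_cl (- b) (- a)) Hm ->
  (forall z, in_sector (- b) (- a) z -> Jval (col2W Hp (Cconj z)) = col2W Hm z) /\
  (forall z, in_sector a b z -> Jval (col2W Hm (Cconj z)) = col2W Hp z) /\
  ((exists k : Z, l = IZR k) ->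
     (forall r theta, 0 < r -> 2 * PI - b < theta < 2 * PI - a ->
        Jval (col1W Hp l mu r (2 * PI - theta)) = vopp (col1W Hm l mu r theta)) /\
     (forall r theta, 0 < r -> a < theta < b ->
        Jval (col1W Hm l mu r (2 * PI - theta)) = vopp (col1W Hp l mu r theta))).
Proof.
  intros _ Hl Hmu Ha Hb Np Nm; pose proof PI_RGT_0.
  apply radially_normalizing_of_normalizing in Np, Nm.
  assert (Um := radially_normalizing_unique omega l mu (- b) (- a) (- PI) _ _ Hl Hmu
                  ltac:(lra) ltac:(lra) ltac:(rewrite cos_neg; apply cos_PI)
                  (radially_normalizing_conj_gauge _ _ _ _ _ _ Np) Nm).
  assert (Up := radially_normalizing_unique omega l mu a b PI _ _ Hl Hmu
                  ltac:(lra) ltac:(lra) cos_PI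
                  ltac:(rewrite <- (Ropp_involutive a), <- (Ropp_involutive b);
                        apply radially_normalizing_conj_gauge, Nm) Np).
  split; [|split; [|intros Hk; split]].
  - intros z Hz; destruct (Um z Hz) as (_ & e12 & _ & e22).
    rewrite Jval_col2W; unfold col2W; now rewrite e12, e22.
  - intros z Hz; destruct (Up z Hz) as (_ & e12 & _ & e22).
    rewrite Jval_col2W; unfold col2W; now rewrite e12, e22.
  - intros r th Hr Hth; rewrite Jval_col1W by auto; f_equal.
    destruct (Um (polar r th)) as (e11 & _ & e21 & _).
    { rewrite <- polar_sub_2PI; apply in_sector_polar; lra. }
    apply col1W_congr; auto.
  - intros r th Hr Hth; rewrite Jval_col1W by auto; f_equal.
    destruct (Up (polar r th) ltac:(apply in_sector_polar; lra)) as (e11 & _ & e21 & _).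
    apply col1W_congr; auto.
Qed.
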